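(* Let $\rho:\mathbb{Z}\to[0,\infty)$ be a weight with finite moments, and let $f,g$ be polynomials with $\deg f\le2$, $\deg g\le1$, satisfying $f(x+1)\rho(x+1)-f(x)\rho(x)=g(x)\rho(x)$ for all $x\in\mathbb{Z}$, with $\rho(x)f(x)$ vanishing at the end points of the support of $\rho$. Let $\{p_n\}_{n\ge0}$ be the monic orthogonal polynomials for $\rho$, $\sum_{x}p_mp_n\rho=h_n\delta_{n,m}$, $h_n>0$, let $\mathcal{A}_{\rm l}=g(x)T+f(x)(\Delta+\nabla)$ and let $c_n:=-\sum_{x\in\mathbb{Z}}p_{n+1}(x)(\mathcal{A}_{\rm l}p_n)(x)\rho(x)$. Put $\omega(x)=f(x+1)\rho(x+1)$ and $\langle\phi,\psi\rangle_{s,\omega}=\sum_{x\in\mathbb{Z}}[\phi(x)\psi(x+1)-\phi(x+1)\psi(x)]\omega(x)$, and assume the Pfaffians $\tau_{2n}=\mathrm{Pf}[\langle x^i,x^j\rangle_{s,\omega}]_{i,j=0}^{2n-1}$ are nonzero for all $n\ge1$. Then the polynomials $$Q_{2n+1}(x)=p_{2n+1}(x),\qquad Q_{2n}(x)=\sum_{l=0}^{n}\Big(\prod_{j=l}^{n-1}\frac{c_{2j+1}}{c_{2j}}\Big)p_{2l}(x)$$ (which, when all $c_{2j+1}\neq0$, equals $\big(\prod_{j=0}^{n-1}\frac{c_{2j+1}}{c_{2j}}\big)\sum_{l=0}^{n}\prod_{j=0}^{l-1}\frac{c_{2j}}{c_{2j+1}}p_{2l}(x)$) are monic skew orthogonal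 polynomials for $\langle\cdot,\cdot\rangle_{s,\omega}$, i.e. $\langle Q_{2n},Q_{2m+1}\rangle_{s,\omega}=-\langle Q_{2m+1},Q_{2n}\rangle_{s,\omega}=u_n\delta_{n,m}$ and $\langle Q_{2m},Q_{2n}\rangle_{s,\omega}=\langle Q_{2m+1},Q_{2n+1}\rangle_{s,\omega}=0$, with normalisation $u_n=c_{2n}$.
   Context: $T\phi(x)=\phi(x+1)$, $\Delta\phi(x)=\phi(x+1)-\phi(x)$, $\nabla\phi(x)=\phi(x)-\phi(x-1)$. Skew orthogonal polynomials are monic, $\deg Q_k=k$, and are unique only up to $Q_{2m+1}\mapsto Q_{2m+1}+\gamma_{2m}Q_{2m}$. It is a fact (from the paper) that $\mathcal{A}_{\rm l}p_n=-\frac{c_n}{h_{n+1}}p_{n+1}+\frac{c_{n-1}}{h_{n-1}}p_{n-1}$. *)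

From HB Require Import structures.
From mathcomp Require Import all_boot all_order all_algebra perm.
From mathcomp Require Import all_classical all_reals all_analysis.
Set Implicit Arguments. Unset Strict Implicit. Unset Printing Implicit Defensive.
Import Order.TTheory GRing.Theory Num.Theory.
Import numFieldNormedType.Exports.
Local Open Scope ring_scope.

Section Defs.
Variable R : realType.

Definition pev (p : {poly R}) (x : int) : R := p.[x%:~R].

Definition zpartial (a : int -> R) (N : nat) : R :=
  \sum_(i < (N.*2).+1) a (i%:Z - N%:Z).
Definition zsum (a : int -> R) : R := limn (zpartial a).

Definition weight_finite_moments (rho : int -> R) : Prop :=
  (forall x, 0 <= rho x) /\
  forall k : nat,
    cvgn (series (fun n : nat => n%:R ^+ k * (rho n%:Z + rho (- n%:Z)))).

Definition Al (f g p : {poly R}) (x : int) : R :=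
  pev g x * pev p (x + 1) + pev f x * (pev p (x + 1) - pev p (x - 1)).

Definition omega (f : {poly R}) (rho : int -> R) (x : int) : R :=
  pev f (x + 1) * rho (x + 1).

Definition skew_s (f : {poly R}) (rho : int -> R) (phi psi : {poly R}) : R :=
  zsum (fun x => (pev phi x * pev psi (x + 1) - pev phi (x + 1) * pev psi x)
                  * omega f rho x).

Lemma pf_lt_even n (i : 'I_n) : (i.*2 < n.*2)%N.
Proof. by rewrite ltn_double. Qed.
Lemma pf_lt_odd n (i : 'I_n) : ((i.*2).+1 < n.*2)%N.
Proof. by rewrite -doubleS leq_double. Qed.

Definition pfaffian (n : nat) (A : 'M[R]_(n.*2)) : R :=
  ((2 ^ n * n`!)%:R)^-1 *
  \sum_(s : 'S_(n.*2))
     (-1) ^+ s * \prod_(i < n) A (s (Ordinal (pf_lt_even i)))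
                                 (s (Ordinal (pf_lt_odd i))).

Definition tau (f : {poly R}) (rho : int -> R) (n : nat) : R :=
  pfaffian (\matrix_(i < n.*2, j < n.*2) skew_s f rho 'X^i 'X^j).

Definition cc (f g : {poly R}) (rho : int -> R) (p : nat -> {poly R}) (n : nat) : R :=
  - zsum (fun x => pev (p n.+1) x * Al f g (p n) x * rho x).

Definition Qpoly (f g : {poly R}) (rho : int -> R) (p : nat -> {poly R}) (k : nat)
  : {poly R} :=
  if odd k then p k
  else \sum_(0 <= l < (k./2).+1)
         (\prod_(l <= j < k./2) (cc f g rho p (j.*2).+1 / cc f g rho p j.*2))
         *: p l.*2.

End Defs.

From HB Require Import structures.
From mathcomp Require Import all_boot all_order all_algebra perm.
From mathcomp Require Import all_classical all_reals all_analysis.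
From mathcomp Require Import zify ring lra.
Set Implicit Arguments. Unset Strict Implicit. Unset Printing Implicit Defensive.
Import Order.TTheory GRing.Theory Num.Theory.
Import numFieldNormedType.Exports.
Local Open Scope ring_scope.

(* Finite moments make [q |-> sum_x q(x) rho(x)] a linear functional on polynomials.
   Summation by parts and the Pearson equation (f rho)(x+1) - (f rho)(x) = g(x) rho(x)
   turn the skew form into <phi, psi>_{s,omega} = sum_x phi(x) (A_l psi)(x) rho(x), and
   A_l raises degrees by at most one, so by orthogonality the skew Gram matrix of the
   p_n is tridiagonal with <p_n, p_{n+1}> = c_n.  If c_{2m} vanished, p_{2m+1} would be
   skew-orthogonal to every polynomial of degree at most 2m+1; substituting it for
   x^{2m+1} in the monomial Gram matrix then kills the Pfaffian tau_{2m+2}.  With all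
   c_{2m} nonzero, the coefficients of Q_{2n} make <Q_{2n}, p_{2m+1}> telescope to
   c_{2n} delta_{nm}, while pairs of equal parity are skew-orthogonal by tridiagonality. *)

Section ZSums.
Variable R : realType.
Implicit Types a b : int -> R.

Lemma zpartial0 a : zpartial a 0 = a 0.
Proof. by rewrite /zpartial big_ord1. Qed.

Lemma zpartialS a N :
  zpartial a N.+1 = a (- (N.+1)%:Z) + zpartial a N + a (N.+1)%:Z.
Proof.
rewrite /zpartial doubleS big_ord_recl big_ord_recr /= -addrA sub0r.
by congr (_ + (_ + a _)); [apply: eq_bigr => i _; congr (a _)|]; rewrite /bump /=; lia.
Qed.

Lemma zpartialD a b N : zpartial (a \+ b) N = zpartial a N + zpartial b N.
Proof. exact: big_split. Qed.

Lemma zpartialZ c a N : zpartial (fun x => c * a x) N = c * zpartial a N.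
Proof. by rewrite /zpartial mulr_sumr. Qed.

Lemma ler_zpartial a b N : (forall x, a x <= b x) -> zpartial a N <= zpartial b N.
Proof. by move=> le_ab; apply: ler_sum => i _. Qed.

Lemma zpartial_shift a N :
  zpartial (fun x => a (x + 1)) N = zpartial a N + (a (N.+1)%:Z - a (- N%:Z)).
Proof.
elim: N => [|N IH]; first by rewrite !zpartial0 oppr0; ring.
rewrite !zpartialS IH.
have -> : (- (N.+1)%:Z + 1 = - N%:Z)%R by lia.
have -> : ((N.+1)%:Z + 1 = (N.+2)%:Z)%R by lia.
ring.
Qed.

Lemma is_cvg_zpartial_ge0 a B : (forall x, 0 <= a x) ->
  (forall N, zpartial a N <= B) -> cvgn (zpartial a).
Proof.
move=> a_ge0 le_B; apply: nondecreasing_is_cvgn; last by exists B => _ [N _ <-].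
apply/nondecreasing_seqP => N; rewrite zpartialS.
by have := a_ge0 (- (N.+1)%:Z); have := a_ge0 (N.+1)%:Z; lra.
Qed.

Definition zsummable a := exists B, forall N, zpartial (fun x => `|a x|) N <= B.

Lemma zsummable_cvg a : zsummable a -> cvgn (zpartial a).
Proof.
move=> [B le_B].
have -> : zpartial a = zpartial (fun x => a x + `|a x|) - zpartial (fun x => `|a x|).
  by apply/funext => N; rewrite !fctE zpartialD addrK.
have abs_ge0 x : 0 <= a x + `|a x| by rewrite -lerBlDr sub0r; apply: lerNnormlW.
apply: is_cvgB; last exact: is_cvg_zpartial_ge0 le_B.
apply: (@is_cvg_zpartial_ge0 _ (B + B)) => // N; rewrite zpartialD lerD //.
by apply: le_trans (le_B N); apply: ler_zpartial => x; apply: ler_norm.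
Qed.

Lemma zsummableD a b : zsummable a -> zsummable b -> zsummable (a \+ b).
Proof.
move=> [A le_A] [B le_B]; exists (A + B) => N; apply: le_trans (lerD (le_A N) (le_B N)).
by rewrite -zpartialD; apply: ler_zpartial => x; apply: ler_normD.
Qed.

Lemma zsummableZ c a : zsummable a -> zsummable (fun x => c * a x).
Proof.
move=> [B le_B]; exists (`|c| * B) => N.
rewrite (_ : (fun x => _) = fun x => `|c| * `|a x|); last by apply/funext=> x; rewrite normrM.
by rewrite zpartialZ ler_wpM2l.
Qed.

Lemma zsummable_sum (I : Type) (r : seq I) (F : I -> int -> R) :
  (forall i, zsummable (F i)) -> zsummable (fun x => \sum_(i <- r) F i x).
Proof.
move=> sF; elim: r => [|i r IH].
  by exists 0 => N; rewrite /zpartial big1 // => j _; rewrite big_nil normr0.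
rewrite (_ : (fun x => _) = F i \+ fun x => \sum_(j <- r) F j x); first exact: zsummableD.
by apply/funext => x; rewrite big_cons.
Qed.

Lemma zsumD a b : zsummable a -> zsummable b -> zsum (a \+ b) = zsum a + zsum b.
Proof.
move=> sa sb; rewrite /zsum.
have -> : zpartial (a \+ b) = zpartial a + zpartial b by apply/funext => N; apply: zpartialD.
by apply: limD; apply: zsummable_cvg.
Qed.

Lemma zsumZ c a : zsummable a -> zsum (fun x => c * a x) = c * zsum a.
Proof.
move=> sa; rewrite /zsum.
have -> : zpartial (fun x => c * a x) = c *: zpartial a by apply/funext => N; apply: zpartialZ.
by apply: limZl_tmp; apply: zsummable_cvg.
Qed.

(* The tail terms are increments of the convergent sequence of partial sums of [|a|]. *)
Lemma zsummable_cvg0 a : zsummable a ->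
  (a N%:Z @[N --> \oo] --> 0)%classic /\ (a (- N%:Z) @[N --> \oo] --> 0)%classic.
Proof.
move=> [B le_B].
set S := zpartial (fun x => `|a x|).
have cS : cvgn S by apply: (is_cvg_zpartial_ge0 _ le_B).
have dS : (S N.+1 - S N @[N --> \oo] --> (0 : R))%classic.
  by rewrite -(subrr (limn S)); apply: cvgB => //; rewrite cvg_shiftS.
have tail (u : nat -> int) : (forall N, `|a (u N.+1)| <= S N.+1 - S N) ->
    (a (u N) @[N --> \oo] --> 0)%classic.
  move=> le_u; apply: norm_cvg0; rewrite -cvg_shiftS /=.
  apply: (squeeze_cvgr _ (cvg_cst 0) dS); apply: nearW => N.
  by rewrite normr_ge0 le_u.
split; apply: tail => N; rewrite /S zpartialS addrAC addrK.
  by rewrite lerDr.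
by rewrite lerDl.
Qed.

Lemma zsum_shift a : zsummable a -> zsum (fun x => a (x + 1)) = zsum a.
Proof.
move=> sa; have [tail_pos tail_neg] := zsummable_cvg0 sa.
have ends0 : (a (N.+1)%:Z - a (- N%:Z) @[N --> \oo] --> (0 : R))%classic.
  by rewrite -(subr0 0); apply: cvgB => //; rewrite (cvg_shiftS (fun N => a N%:Z)).
rewrite /zsum.
have -> : zpartial (fun x => a (x + 1)) = zpartial a + fun N => a (N.+1)%:Z - a (- N%:Z).
  by apply/funext => N; rewrite zpartial_shift.
by rewrite limD ?(cvg_lim _ ends0) ?addr0 //; apply: zsummable_cvg.
Qed.

End ZSums.

Section LinearFunctional.
Variables (R : pzRingType) (V : lmodType R) (F : V -> R).
Hypothesis F_linear : forall a u v, F (a *: u + v) = a * F u + F v.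

Lemma linear_fun0 : F 0 = 0.
Proof.
by have := F_linear 1 0 0; rewrite scale1r addr0 mul1r -{1}[F 0]addr0 => /addrI.
Qed.

Lemma linear_funB u v : F (u - v) = F u - F v.
Proof. by rewrite -scaleN1r addrC F_linear mulN1r addrC. Qed.

Lemma linear_fun_lincomb (I : Type) (r : seq I) (c : I -> R) (v : I -> V) :
  F (\sum_(i <- r) c i *: v i) = \sum_(i <- r) c i * F (v i).
Proof.
elim: r => [|i r IH]; first by rewrite !big_nil linear_fun0.
by rewrite !big_cons F_linear IH.
Qed.

End LinearFunctional.

Lemma size_polyB_eq_lead (R : nzRingType) (p q : {poly R}) :
  size p = size q -> lead_coef p = lead_coef q -> (size (p - q)%R <= (size p).-1)%N.
Proof.
move=> eq_size eq_lead; apply/leq_sizeP => j le_j; rewrite coefB.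
have [->|ne_j] := eqVneq j (size p).-1.
  by rewrite -lead_coefE eq_size -lead_coefE eq_lead subrr.
have lt_j : (size p <= j)%N by move: le_j ne_j; case: (size p) => //= n; lia.
by rewrite !nth_default ?subrr // -eq_size.
Qed.

Section PolyShift.
Variable R : idomainType.
Implicit Types q : {poly R}.

Definition shiftp (z : int) q := q \Po ('X + (z%:~R)%:P).

Lemma horner_shiftp z q x : (shiftp z q).[x] = q.[x + z%:~R].
Proof. by rewrite horner_comp !hornerE. Qed.

Lemma shiftpK z : cancel (shiftp z) (shiftp (- z)).
Proof. by move=> q; rewrite /shiftp mulrNz polyCN comp_polyXaddC_K. Qed.

Lemma shiftpM z q1 q2 : shiftp z (q1 * q2) = shiftp z q1 * shiftp z q2.
Proof. exact: comp_polyM. Qed.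

Lemma shiftpB z q1 q2 : shiftp z (q1 - q2) = shiftp z q1 - shiftp z q2.
Proof. exact: raddfB. Qed.

Lemma shiftpN z q : shiftp z (- q) = - shiftp z q.
Proof. exact: raddfN. Qed.

Lemma size_shiftp z q : size (shiftp z q) = size q.
Proof. by rewrite size_comp_poly2 // size_XaddC. Qed.

Lemma lead_coef_shiftp z q : lead_coef (shiftp z q) = lead_coef q.
Proof. by rewrite lead_coef_comp ?size_XaddC // lead_coefXaddC expr1n mulr1. Qed.

Lemma size_shiftpB z w q : (size (shiftp z q - shiftp w q)%R <= (size q).-1)%N.
Proof.
rewrite -(size_shiftp z q) size_polyB_eq_lead //.
  by rewrite !size_shiftp.
by rewrite !lead_coef_shiftp.
Qed.

End PolyShift.

Lemma pev_shiftp (R : realType) (z : int) (q : {poly R}) x :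
  pev (shiftp z q) x = pev q (x + z).
Proof. by rewrite /pev horner_shiftp intrD. Qed.

Section WeightedSums.
Variables (R : realType) (rho : int -> R).
Hypothesis rho_moments : weight_finite_moments rho.

Lemma zpartial_moment_le k N :
  zpartial (fun x => `|x%:~R ^+ k * rho x|) N <=
  series (fun n : nat => n%:R ^+ k * (rho n%:Z + rho (- n%:Z))) N.+1.
Proof.
have rho_ge0 := rho_moments.1.
elim: N => [|N IH].
  rewrite zpartial0 seriesSr /series /= big_geq // add0r normrM normrX.
  rewrite (ger0_norm (rho_ge0 _)) oppr0 /= mulr0z normr0.
  by rewrite ler_wpM2l ?exprn_ge0 // lerDl.
rewrite zpartialS seriesSr.
rewrite !normrM !normrX !(ger0_norm (rho_ge0 _)) mulrNz normrN -!pmulrn.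
by rewrite (ger0_norm (ler0n _ _)) mulrDr; lra.
Qed.

Lemma zsummable_moment k : zsummable (fun x => x%:~R ^+ k * rho x).
Proof.
set u := series (fun n : nat => n%:R ^+ k * (rho n%:Z + rho (- n%:Z))).
have u_nd : nondecreasing_seq u.
  apply/nondecreasing_seqP => n; rewrite /u seriesSr lerDl.
  by rewrite mulr_ge0 ?exprn_ge0 ?addr_ge0 //; apply: rho_moments.1.
exists (limn u) => N; apply: le_trans (zpartial_moment_le k N) _.
exact: nondecreasing_cvgn_le u_nd (rho_moments.2 k) _.
Qed.

Lemma zsummable_poly (q : {poly R}) : zsummable (fun x => pev q x * rho x).
Proof.
have -> : (fun x => pev q x * rho x) =
          fun x => \sum_(i < size q) q`_i * (x%:~R ^+ i * rho x).
  by apply/funext => x; rewrite /pev horner_coef mulr_suml; apply: eq_bigr => i _; rewrite mulrA.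
by apply: zsummable_sum => i; apply/zsummableZ/zsummable_moment.
Qed.

Definition wsum (q : {poly R}) : R := zsum (fun x => pev q x * rho x).

Lemma wsum_linear a q1 q2 : wsum (a *: q1 + q2) = a * wsum q1 + wsum q2.
Proof.
have [s1 s2] := (zsummable_poly q1, zsummable_poly q2).
rewrite /wsum -(zsumZ a s1) -(zsumD (zsummableZ a s1) s2).
by congr zsum; apply/funext => x; rewrite /pev hornerD hornerZ /= mulrDl mulrA.
Qed.

Lemma wsum_shift q : zsum (fun x => pev q x * rho (x + 1)) = wsum (shiftp (-1) q).
Proof.
rewrite /wsum -[RHS](zsum_shift (zsummable_poly _)).
by congr zsum; apply/funext => x; rewrite pev_shiftp addrK.
Qed.

End WeightedSums.

Section SkewForm.
Variables (R : realType) (rho : int -> R) (f g : {poly R}).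
Hypothesis rho_moments : weight_finite_moments rho.
Hypothesis pearson : forall x : int,
  pev f (x + 1) * rho (x + 1) - pev f x * rho x = pev g x * rho x.
Implicit Types q phi psi : {poly R}.

Local Notation wsum := (wsum rho).
Local Notation sk := (skew_s f rho).

Definition Alp q := g * shiftp 1 q + f * (shiftp 1 q - shiftp (-1) q).

Lemma pev_Alp q x : pev (Alp q) x = Al f g q x.
Proof. by rewrite /Alp /Al /pev !(hornerE, horner_shiftp) !intrD. Qed.

Lemma skew_s_wsum phi psi :
  sk phi psi = wsum (shiftp (-1) ((phi * shiftp 1 psi - shiftp 1 phi * psi) * shiftp 1 f)).
Proof.
rewrite -wsum_shift //; congr zsum; apply/funext => x.
by rewrite /omega /pev !(hornerE, horner_shiftp) !intrD.
Qed.

Lemma wsum_pearson q : wsum (shiftp (-1) (q * shiftp 1 f)) = wsum (q * (f + g)).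
Proof.
rewrite -wsum_shift //; congr zsum; apply/funext => x.
rewrite /pev !(hornerE, horner_shiftp) -!intrD -!/(pev _ _) -mulrA.
have -> : pev f (x + 1) * rho (x + 1) = pev f x * rho x + pev g x * rho x.
  by rewrite -pearson; ring.
by rewrite -mulrA -mulrDl.
Qed.

(* Summation by parts: Pearson on the first half of the skew form, a shift back on the second. *)
Lemma skew_s_Alp phi psi : sk phi psi = wsum (phi * Alp psi).
Proof.
have wsumB := linear_funB (wsum_linear rho_moments).
rewrite skew_s_wsum mulrBl shiftpB wsumB wsum_pearson !shiftpM !shiftpK -wsumB.
by congr wsum; rewrite /Alp; ring.
Qed.

Lemma skew_sC phi psi : sk psi phi = - sk phi psi.
Proof.
rewrite !skew_s_wsum -[RHS]sub0r -(linear_fun0 (wsum_linear rho_moments)).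
rewrite -(linear_funB (wsum_linear rho_moments)) -shiftpN add0r.
by congr (wsum (shiftp _ _)); ring.
Qed.

Lemma skew_s_linearl psi a phi1 phi2 :
  sk (a *: phi1 + phi2) psi = a * sk phi1 psi + sk phi2 psi.
Proof. by rewrite !skew_s_Alp mulrDl -scalerAl wsum_linear. Qed.

Lemma skew_s_linearr phi a psi1 psi2 :
  sk phi (a *: psi1 + psi2) = a * sk phi psi1 + sk phi psi2.
Proof. by rewrite skew_sC skew_s_linearl !(skew_sC _ phi) mulrN opprD. Qed.

Lemma size_Alp q : (size f <= 3)%N -> (size g <= 2)%N -> (0 < size q)%N ->
  (size (Alp q) <= (size q).+1)%N.
Proof.
move=> size_f size_g q_neq0; have size_D := size_shiftpB 1 (-1) q.
rewrite /Alp; apply: leq_trans (size_polyD _ _) _; rewrite geq_max.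
apply/andP; split; apply: leq_trans (size_polyMleq _ _) _.
(* [size q] is elaborated through two different structures below; [set] identifies them,
   which [lia] would not. *)
  by rewrite size_shiftp; set s := size q in q_neq0 *; lia.
rewrite -subn1 leq_subLR; apply: leq_trans (leq_add size_f size_D) _.
by set s := size q in q_neq0 *; lia.
Qed.

End SkewForm.

Section PfaffianGram.
Variables (R : realType) (V : lmodType R) (b : V -> V -> R).
Hypothesis b_linearl : forall w a u1 u2, b (a *: u1 + u2) w = a * b u1 w + b u2 w.
Hypothesis b_linearr : forall w a u1 u2, b w (a *: u1 + u2) = a * b w u1 + b w u2.
Variable n : nat.
Local Notation N2 := n.*2.
Implicit Types (s : 'S_N2) (y z : 'I_N2) (v : 'I_N2 -> V).

Definition pf_fst (i : 'I_n) : 'I_N2 := Ordinal (pf_lt_even i).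
Definition pf_snd (i : 'I_n) : 'I_N2 := Ordinal (pf_lt_odd i).

Definition pf_term v s := \prod_(i < n) b (v (s (pf_fst i))) (v (s (pf_snd i))).
Definition pf_sum v := \sum_(s : 'S_N2) (-1) ^+ s * pf_term v s.

Lemma pfaffian_gram v :
  pfaffian (\matrix_(i, j) b (v i) (v j)) = ((2 ^ n * n`!)%:R)^-1 * pf_sum v.
Proof.
rewrite /pfaffian /pf_sum; congr (_ * _); apply: eq_bigr => s _; congr (_ * _).
by apply: eq_bigr => i _; rewrite mxE.
Qed.

(* Composing with a transposition flips the sign but not the term. *)
Lemma pf_sum_eq0_dup v y z : y != z -> v y = v z -> pf_sum v = 0.
Proof.
move=> neq_yz eq_v; set t := tperm y z.
have v_t x : v (t x) = v x by rewrite /t; case: tpermP => // ->.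
suff : pf_sum v = - pf_sum v by lra.
rewrite {1}/pf_sum (reindex_inj (mulIg t)) -sumrN; apply: eq_bigr => s _.
rewrite odd_permM odd_tperm neq_yz signr_addb expr1 mulrN1 mulNr; congr (- (_ * _)).
by apply: eq_bigr => i _; rewrite !permM !v_t.
Qed.

Definition pf_pair s y : 'I_n := Ordinal (etrans (ltn_half_double _ _) (ltn_ord ((s^-1)%g y))).

Lemma pf_pairP s y i : (s (pf_fst i) == y) || (s (pf_snd i) == y) = (i == pf_pair s y).
Proof.
rewrite !(canF_eq (permK s)) -!val_eqE /=.
by move: (nat_of_ord _) => k; apply/orP/eqP => /=; lia.
Qed.

Lemma pf_snd_neq s y i : s (pf_fst i) == y -> s (pf_snd i) != y.
Proof.
move/eqP <-; rewrite (inj_eq perm_inj) -val_eqE /=; lia.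
Qed.

Definition pf_slot v s y w :=
  let i := pf_pair s y in
  if s (pf_fst i) == y then b w (v (s (pf_snd i))) else b (v (s (pf_fst i))) w.

Lemma pf_term_set v s y w : pf_term [eta v with y |-> w] s =
  pf_slot v s y w * \prod_(i < n | i != pf_pair s y) b (v (s (pf_fst i))) (v (s (pf_snd i))).
Proof.
rewrite /pf_term (bigD1 (pf_pair s y)) //=; congr (_ * _).
  have := pf_pairP s y (pf_pair s y); rewrite eqxx /pf_slot /=.
  by case: ifP => [/pf_snd_neq/negbTE -> //|_ /= ->].
apply: eq_bigr => i; rewrite -pf_pairP negb_or => /andP[/negbTE -> /negbTE ->].
by [].
Qed.

Lemma pf_slot_linear v s y a w1 w2 :
  pf_slot v s y (a *: w1 + w2) = a * pf_slot v s y w1 + pf_slot v s y w2.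
Proof. by rewrite /pf_slot; case: ifP => _; [apply: b_linearl | apply: b_linearr]. Qed.

Lemma pf_sum_set_linear v y a w1 w2 : pf_sum [eta v with y |-> a *: w1 + w2] =
  a * pf_sum [eta v with y |-> w1] + pf_sum [eta v with y |-> w2].
Proof.
rewrite /pf_sum mulr_sumr -big_split; apply: eq_bigr => s _ /=.
rewrite !pf_term_set pf_slot_linear.
by move: (pf_slot _ _ _ w1) (pf_slot _ _ _ w2) ((-1) ^+ _) (\prod_(_ < _ | _) _) => X Y e P; ring.
Qed.

Lemma pf_sum_set_orth v y w : (forall z, z != y -> b w (v z) = 0 /\ b (v z) w = 0) ->
  pf_sum [eta v with y |-> w] = 0.
Proof.
move=> w_orth; apply: big1 => s _; rewrite pf_term_set /pf_slot.
by case: ifP => [/pf_snd_neq/w_orth[-> _]|/negbT/w_orth[_ ->]]; rewrite !mul0r mulr0.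
Qed.

Lemma pfaffian_gram_eq0 v y w (c : 'I_N2 -> R) :
  (forall z, z != y -> b w (v z) = 0 /\ b (v z) w = 0) ->
  v y = w + \sum_z c z *: v z -> c y = 0 ->
  pfaffian (\matrix_(i, j) b (v i) (v j)) = 0.
Proof.
move=> w_orth v_y c_y; rewrite pfaffian_gram.
have -> : v = [eta v with y |-> v y] by apply/funext => z /=; case: eqP => // ->.
rewrite v_y -[w]scale1r pf_sum_set_linear (linear_fun_lincomb (pf_sum_set_linear v y)).
rewrite pf_sum_set_orth // mulr0 add0r big1 ?mulr0 // => z _.
have [->|neq_zy] := eqVneq z y; first by rewrite c_y mul0r.
rewrite (@pf_sum_eq0_dup _ y z) ?mulr0 //=; first by rewrite eq_sym.
by rewrite eqxx (negbTE neq_zy).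
Qed.

End PfaffianGram.

Section MonicBasis.
Variables (R : nzRingType) (p : nat -> {poly R}).
Hypothesis p_monic : forall n, p n \is monic.
Hypothesis size_p : forall n, size (p n) = n.+1.

Lemma poly_span_monic k (q : {poly R}) :
  (size q <= k)%N -> exists c : nat -> R, q = \sum_(i < k) c i *: p i.
Proof.
elim: k q => [|k IH] q size_q.
  by move: size_q; rewrite size_poly_leq0 => /eqP ->; exists (fun=> 0); rewrite big_ord0.
have [|c def_q] := IH (q - q`_k *: p k).
  apply/leq_sizeP => j le_kj; rewrite coefB coefZ.
  have [<-|lt_kj] := eqVneq k j.
    by have := monicP (p_monic k); rewrite lead_coefE size_p => ->; rewrite mulr1 subrr.
  have {}lt_kj : (k < j)%N by rewrite ltn_neqAle lt_kj le_kj.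
  rewrite [(p k)`_j]nth_default ?size_p // [q`_j]nth_default ?mulr0 ?subrr //.
  exact: leq_trans size_q lt_kj.
exists (fun i => if i == k then q`_k else c i).
rewrite big_ord_recr /= eqxx -{1}(subrK (q`_k *: p k) q) def_q; congr (_ + _).
by apply: eq_bigr => i _; rewrite ltn_eqF.
Qed.

End MonicBasis.

Section SkewOrthogonal.
Variables (R : realType) (rho : int -> R) (f g : {poly R}).
Variables (p : nat -> {poly R}) (h : nat -> R).
Hypothesis rho_moments : weight_finite_moments rho.
Hypothesis size_f : (size f <= 3)%N.
Hypothesis size_g : (size g <= 2)%N.
Hypothesis pearson : forall x : int,
  pev f (x + 1) * rho (x + 1) - pev f x * rho x = pev g x * rho x.
Hypothesis p_monic : forall n, p n \is monic.
Hypothesis size_p : forall n, size (p n) = n.+1.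
Hypothesis p_orth : forall m n,
  zsum (fun x => pev (p m) x * pev (p n) x * rho x) = if m == n then h n else 0.

Local Notation sk := (skew_s f rho).
Local Notation Q := (Qpoly f g rho p).
Local Notation c := (cc f g rho p).

Let sk_anti := skew_sC f rho_moments.
Let sk_Alp := skew_s_Alp rho_moments pearson.
Let sk_linearl := skew_s_linearl rho_moments pearson.
Let sk_linearr := skew_s_linearr rho_moments pearson.

Lemma wsum_p_low k (q : {poly R}) : (size q <= k)%N -> wsum rho (p k * q) = 0.
Proof.
move=> /(poly_span_monic p_monic size_p) [a ->].
rewrite mulr_sumr; under eq_bigr do rewrite -scalerAr.
rewrite (linear_fun_lincomb (wsum_linear rho_moments)) big1 // => i _.
have -> : wsum rho (p k * p i) = if k == i then h i else 0.
  by rewrite -p_orth; congr zsum; apply/funext => x; rewrite /pev hornerM.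
by rewrite gtn_eqF // mulr0.
Qed.

Lemma cc_skew n : c n = sk (p n) (p n.+1).
Proof.
rewrite /cc sk_anti sk_Alp; congr (- _).
by congr zsum; apply/funext => x; rewrite /pev hornerM -/(pev _ _) -pev_Alp.
Qed.

Lemma skew_p_far i j : (j.+2 <= i)%N -> sk (p i) (p j) = 0.
Proof.
move=> le_ji; rewrite sk_Alp wsum_p_low //.
by apply: leq_trans (size_Alp size_f size_g _) _; rewrite size_p.
Qed.

Lemma skew_p i j :
  sk (p i) (p j) = (if j == i.+1 then c i else 0) - (if i == j.+1 then c j else 0).
Proof.
case: (ltngtP i j) => [lt_ij|lt_ji|<-].
- rewrite (ltn_eqF (ltn_trans lt_ij (ltnSn _))) subr0.
  case: eqP => [->|ne_j]; first by rewrite cc_skew.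
  by rewrite sk_anti skew_p_far ?oppr0 //; lia.
- rewrite (ltn_eqF (ltn_trans lt_ji (ltnSn _))) sub0r.
  case: eqP => [->|ne_i]; first by rewrite cc_skew sk_anti.
  by rewrite skew_p_far ?oppr0 //; lia.
- by rewrite !(ltn_eqF (ltnSn _)) subrr; have := sk_anti (p i) (p i); lra.
Qed.

Lemma skew_p_parity i j : odd i = odd j -> sk (p i) (p j) = 0.
Proof.
have neqS k l : odd k = odd l -> (k == l.+1) = false.
  by move=> eq_kl; apply/eqP => def_k; move: eq_kl; rewrite def_k /=; case: odd.
by move=> eq_odd; rewrite skew_p !neqS ?subrr.
Qed.

Lemma skew_p_low k (q : {poly R}) :
  c k = 0 -> (size q <= k.+1)%N -> sk (p k.+1) q = 0.
Proof.
move=> ck0 /(poly_span_monic p_monic size_p) [a ->].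
rewrite (linear_fun_lincomb (sk_linearr (p k.+1))) big1 // => i _.
rewrite skew_p (ltn_eqF (leq_trans (ltn_ord i) (leqnSn _))).
by case: eqP => [[<-]|_]; rewrite ?ck0 subrr mulr0.
Qed.

Lemma cc_even_neq0 m : tau f rho m.+1 != 0 -> c m.*2 != 0.
Proof.
apply: contraNneq => ck0.
have lt_y : (m.*2.+1 < m.+1.*2)%N by rewrite doubleS.
pose q := 'X^(m.*2.+1) - p m.*2.+1.
have size_q : (size q <= m.*2.+1)%N.
  apply: leq_trans (size_polyB_eq_lead _ _) _; rewrite ?size_polyXn ?size_p //.
  by rewrite lead_coefXn (monicP (p_monic _)).
apply/eqP; rewrite /tau; apply: (pfaffian_gram_eq0 sk_linearl sk_linearr
  (v := fun i : 'I_(m.+1).*2 => 'X^i) (y := Ordinal lt_y) (w := p m.*2.+1) (c := fun z => q`_z)).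
- move=> z; rewrite -val_eqE /= => ne_z.
  have size_z : (size ('X^z : {poly R}) <= m.*2.+1)%N.
    have lt_z : (z < m.*2.+2)%N by rewrite -doubleS.
    by rewrite size_polyXn; lia.
  by rewrite [sk 'X^z _]sk_anti skew_p_low ?oppr0.
- have -> : \sum_(z < m.+1.*2) q`_z *: 'X^z = q.
    by rewrite -poly_def -/(take_poly _ q) take_poly_id // (leq_trans size_q) // doubleS.
  by rewrite /q addrC subrK.
- exact: nth_default.
Qed.

Hypothesis tau_neq0 : forall n, (0 < n)%N -> tau f rho n != 0.

Let c_even_neq0 m : c m.*2 != 0 := cc_even_neq0 (tau_neq0 (ltn0Sn m)).

Definition qcoef n l := \prod_(l <= j < n) (c j.*2.+1 / c j.*2).

Lemma qcoef_id n : qcoef n n = 1.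
Proof. by rewrite /qcoef big_geq. Qed.

Lemma qcoef_rec n l : (l < n)%N -> qcoef n l * c l.*2 = qcoef n l.+1 * c l.*2.+1.
Proof. by move=> lt_ln; rewrite /qcoef big_ltn // mulrAC divfK // mulrC. Qed.

Lemma Qpoly_odd m : Q m.*2.+1 = p m.*2.+1.
Proof. by rewrite /Qpoly /= odd_double. Qed.

Lemma Qpoly_even n : Q n.*2 = \sum_(l < n.+1) qcoef n l *: p l.*2.
Proof. by rewrite /Qpoly odd_double half_double big_mkord. Qed.

Lemma Qpoly_monic k : Q k \is monic /\ size (Q k) = k.+1.
Proof.
have [odd_k|even_k] := boolP (odd k); first by rewrite /Qpoly odd_k.
rewrite -[k]odd_double_half (negbTE even_k) add0n Qpoly_even big_ord_recr /= qcoef_id scale1r.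
set n := k./2; set r := \sum_(l < n) _.
have size_r : (size r < size (p n.*2))%N.
  rewrite size_p ltnS (leq_trans (size_sum _ _ _)) //; apply/bigmax_leqP => l _.
  by rewrite (leq_trans (size_scale_leq _ _)) // size_p ltn_double.
by rewrite addrC monicE lead_coefDl // (monicP (p_monic _)) size_polyDl.
Qed.

Lemma skew_Qeven_Qodd n m : sk (Q n.*2) (Q m.*2.+1) = if n == m then c n.*2 else 0.
Proof.
rewrite Qpoly_odd Qpoly_even (linear_fun_lincomb (sk_linearl (p m.*2.+1))).
have term (l : 'I_n.+1) : qcoef n l * sk (p l.*2) (p m.*2.+1) =
    (if l == m :> nat then qcoef n l * c l.*2 else 0) -
    (if l == m.+1 :> nat then qcoef n l * c m.*2.+1 else 0).
  rewrite skew_p eqSS -doubleS !(inj_eq double_inj) [m == l]eq_sym mulrBr.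
  by do 2!case: eqP => [->|_]; rewrite ?mulr0.
rewrite (eq_bigr _ (fun l _ => term l)) sumrB -!big_mkcond.
rewrite (big_ord1_eq _ (fun l => qcoef n l * c l.*2)).
rewrite (big_ord1_eq _ (fun l => qcoef n l * c m.*2.+1)) !ltnS.
case: (ltngtP m n) => [lt_mn|_|->].
- by rewrite qcoef_rec ?subrr.
- by rewrite subrr.
- by rewrite qcoef_id mul1r subr0.
Qed.

Lemma skew_Qeven_Qeven n m : sk (Q m.*2) (Q n.*2) = 0.
Proof.
rewrite !Qpoly_even (linear_fun_lincomb (sk_linearl _)) big1 // => i _.
rewrite (linear_fun_lincomb (sk_linearr _)) big1 ?mulr0 // => j _.
by rewrite skew_p_parity ?mulr0 // !odd_double.
Qed.

Lemma skew_Qodd_Qodd n m : sk (Q m.*2.+1) (Q n.*2.+1) = 0.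
Proof. by rewrite !Qpoly_odd skew_p_parity //= !odd_double. Qed.

Lemma Qpoly_even_prod n : (forall j, c (2 * j).+1 != 0) ->
  Q (2 * n) = (\prod_(0 <= j < n) (c (2 * j).+1 / c (2 * j))) *:
    \sum_(0 <= l < n.+1) (\prod_(0 <= j < l) (c (2 * j) / c (2 * j).+1)) *: p (2 * l).
Proof.
move=> c_odd_neq0; rewrite mul2n Qpoly_even scaler_sumr.
rewrite -(big_mkord xpredT (fun l => qcoef n l *: p l.*2)).
apply: eq_big_nat => l /andP[_ lt_ln]; rewrite scalerA mul2n; congr (_ *: _).
have le_ln : (l <= n)%N by rewrite -ltnS.
rewrite (big_cat_nat (leq0n l) le_ln) /= mulrAC -big_split /= big1 ?mul1r => [|j _].
  by apply: eq_bigr => j _; rewrite mul2n.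
have c_even_neq0_j : c (2 * j) != 0 by rewrite mul2n.
by rewrite mulrA divfK // divff //; apply: c_odd_neq0.
Qed.

End SkewOrthogonal.

Theorem proposition3p9 (R : realType) (rho : int -> R) (f g : {poly R})
  (p : nat -> {poly R}) (h : nat -> R) :
  weight_finite_moments rho ->
  (size f <= 3)%N -> (size g <= 2)%N ->
  (forall x : int, pev f (x + 1) * rho (x + 1) - pev f x * rho x = pev g x * rho x) ->
  (* f rho vanishes at the (left) end point of the support of rho, if any *)
  (forall a : int, (forall y : int, y < a -> rho y = 0) -> pev f a * rho a = 0) ->
  (forall n, p n \is monic) -> (forall n, size (p n) = n.+1) ->
  (forall n, 0 < h n) ->
  (forall m n, zsum (fun x => pev (p m) x * pev (p n) x * rho x)
               = if m == n then h n else 0) ->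
  (forall n, (0 < n)%N -> tau f rho n != 0) ->
  let c := cc f g rho p in
  let Q := Qpoly f g rho p in
  let sk := skew_s f rho in
  (forall k, Q k \is monic /\ size (Q k) = k.+1) /\
  (forall n m, sk (Q (2 * n)%N) (Q (2 * m)%N.+1) = (if n == m then c (2 * n)%N else 0) /\
               sk (Q (2 * m)%N.+1) (Q (2 * n)%N) = - (if n == m then c (2 * n)%N else 0) /\
               sk (Q (2 * m)%N) (Q (2 * n)%N) = 0 /\
               sk (Q (2 * m)%N.+1) (Q (2 * n)%N.+1) = 0) /\
  ((forall j, c (2 * j)%N.+1 != 0) ->
   forall n, Q (2 * n)%N =
     (\prod_(0 <= j < n) (c (2 * j)%N.+1 / c (2 * j)%N)) *:
       \sum_(0 <= l < n.+1) (\prod_(0 <= j < l) (c (2 * j)%N / c (2 * j)%N.+1)) *: p (2 * l)%N).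
Proof.
move=> rho_moments size_f size_g pearson _ p_monic size_p _ p_orth tau_neq0 c Q sk.
rewrite {}/c {}/Q {}/sk.
split; [|split].
- exact: Qpoly_monic.
- move=> n m; rewrite !mul2n; split; [|split; [|split]].
  + exact: skew_Qeven_Qodd.
  + by rewrite skew_sC //; congr (- _); apply: skew_Qeven_Qodd.
  + exact: skew_Qeven_Qeven.
  + exact: skew_Qodd_Qodd.
- by move=> c_odd_neq0 n; apply: Qpoly_even_prod.
Qed.
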